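(* Let $(X,P,o)$ be a generalized parametric metric space such that $P$ satisfies (P5) and $o$ is continuous. Then $(X,\tau_P)$ is regular: for every closed set $A\subseteq X$ and every $x\in X\setminus A$ there exist disjoint $U,V\in\tau_P$ with $x\in U$ and $A\subseteq V$.
   Context: A binary operation $o:[0,\infty)\times[0,\infty)\to[0,\infty)$ (written $\alpha\, o\, \beta$) is assumed to satisfy, for all $\alpha,\beta,\gamma\in[0,\infty)$: (a) $\alpha\, o\, 0=\alpha$; (b) $\alpha\le\beta\implies \alpha\, o\,\gamma\le\beta\, o\,\gamma$; (c) $\alpha\, o\,\gamma=\gamma\, o\,\alpha$; (d) $\alpha\, o\,(\beta\, o\,\gamma)=(\alpha\, o\,\beta)\, o\,\gamma$. It is continuous if whenever $\alpha_n\to\alpha$ and $\beta_n\to\beta$ in $[0,\infty)$ we have $\alpha_n\, o\,\beta_n\to\alpha\, o\,\beta$. A generalized parametric metric on a nonempty set $X$ is a function $P:X\times X\times(0,\infty)\to[0,\infty)$ such that: (P1) $P(a,b,t)=0$ for all $t>0$ if and only if $a=b$; (P2) $P(a,b,t)=P(b,a,t)$ for all $a,b\in X$, $t>0$; (P3) $P(a,b,s+t)\le P(a,x,s)\, o\, P(b,x,t)$ for all $s,t>0$ and $a,b,x\in X$. The triple $(X,P,o)$ is a generalized parametric metric space. Condition (P5): for all $a,b\in X$, the map $t\mapsto P(a,b,t)$ is continuous on $(0,\infty)$. Open ball: $B(a,\alpha,t)=\{b\in X: P(a,b,t)<\alpha\}$. $\tau_P$ is the topology consisting of all $A\subseteq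 X$ such that for every $a\in A$ there exist $\alpha>0,t>0$ with $B(a,\alpha,t)\subseteq A$. A sequence $\{x_n\}$ converges to $x$ if $\lim_{n\to\infty}P(x_n,x,t)=0$ for all $t>0$. A set $A\subseteq X$ is closed if whenever a sequence in $A$ converges to some $x\in X$, then $x\in A$. *)

From Stdlib Require Import Reals.
Open Scope R_scope.

(* A binary operation o on [0,oo), represented as o : R -> R -> R whose
   behaviour is only constrained on nonnegative arguments. *)
Definition is_binop (o : R -> R -> R) : Prop :=
  (forall a b, 0 <= a -> 0 <= b -> 0 <= o a b) /\
  (forall a, 0 <= a -> o a 0 = a) /\
  (forall a b c, 0 <= a -> a <= b -> 0 <= c -> o a c <= o b c) /\
  (forall a c, 0 <= a -> 0 <= c -> o a c = o c a) /\
  (forall a b c, 0 <= a -> 0 <= b -> 0 <= c -> o a (o b c) = o (o a b) c).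

Definition binop_continuous (o : R -> R -> R) : Prop :=
  forall (an bn : nat -> R) (a b : R),
    (forall n, 0 <= an n) -> (forall n, 0 <= bn n) -> 0 <= a -> 0 <= b ->
    Un_cv an a -> Un_cv bn b -> Un_cv (fun n => o (an n) (bn n)) (o a b).

Definition gen_param_metric {X : Type} (P : X -> X -> R -> R) (o : R -> R -> R) : Prop :=
  (forall a b t, 0 < t -> 0 <= P a b t) /\
  (forall a b, (forall t, 0 < t -> P a b t = 0) <-> a = b) /\
  (forall a b t, 0 < t -> P a b t = P b a t) /\
  (forall a b x s t, 0 < s -> 0 < t -> P a b (s + t) <= o (P a x s) (P b x t)).

Definition P5 {X : Type} (P : X -> X -> R -> R) : Prop :=
  forall a b t, 0 < t -> continuity_pt (fun s => P a b s) t.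

Definition pball {X : Type} (P : X -> X -> R -> R) (a : X) (al t : R) : X -> Prop :=
  fun b => P a b t < al.

Definition tauP_open {X : Type} (P : X -> X -> R -> R) (A : X -> Prop) : Prop :=
  forall a, A a -> exists al t, 0 < al /\ 0 < t /\ forall b, pball P a al t b -> A b.

Definition pconverges {X : Type} (P : X -> X -> R -> R) (u : nat -> X) (x : X) : Prop :=
  forall t, 0 < t -> Un_cv (fun n => P (u n) x t) 0.

Definition pclosed {X : Type} (P : X -> X -> R -> R) (A : X -> Prop) : Prop :=
  forall (u : nat -> X) (x : X), (forall n, A (u n)) -> pconverges P u x -> A x.

From Stdlib Require Import Reals Lra Lia Classical ClassicalEpsilon.
Open Scope R_scope.

(* Closedness gives a "ball" of radius
   e and parameter e around x missing A (otherwise points of A would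
   accumulate at x along the sequence e_n = 1/(n+1)).  Continuity of o at
   (0,0) gives eta > 0 with eta o eta < e.  Then
     U = { y | P(x,y,e/2) < eta },   V = { y | exists a in A, P(a,y,e/2) < eta }
   are disjoint: a common point y would give, by (P3),
   P(x,a,e) <= P(x,y,e/2) o P(a,y,e/2) <= eta o eta < e, putting a in the
   ball around x.  Both sets are open because every ball B(a,al,t) is open:
   by (P5) one may shrink t to t' < t keeping P(a,b,t') < al, then
   continuity of o at (P(a,b,t'),0) gives be with P(a,b,t') o be < al, and
   (P3) with the splitting t = t' + (t - t') shows B(b,be,t-t') is inside. *)

Definition inv_seq (n : nat) : R := / INR (S n).

Lemma inv_seq_pos (n : nat) : 0 < inv_seq n.
Proof. apply Rinv_0_lt_compat, lt_0_INR; lia. Qed.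

Lemma inv_seq_eventually_lt (e : R) :
  0 < e -> exists N, forall n, (N <= n)%nat -> inv_seq n < e.
Proof.
  intros He. destruct (archimed_cor1 e He) as [N [HN HN0]].
  exists N. intros n Hn. apply Rle_lt_trans with (/ INR N); [|exact HN].
  apply Rinv_le_contravar; [apply lt_0_INR; exact HN0|].
  apply le_INR; lia.
Qed.

Lemma inv_seq_cv : Un_cv inv_seq 0.
Proof.
  intros e He. destruct (inv_seq_eventually_lt e He) as [N HN]. exists N.
  intros n Hn. unfold R_dist. rewrite Rminus_0_r.
  pose proof (inv_seq_pos n). rewrite Rabs_right by lra. auto.
Qed.

Lemma const_cv (c : R) : Un_cv (fun _ => c) c.
Proof.
  intros e He. exists 0%nat. intros n _. unfold R_dist.
  rewrite Rminus_diag, Rabs_R0. exact He.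
Qed.

Section BinaryOperation.
Variable o : R -> R -> R.
Hypothesis Ho : is_binop o.

(* o is monotone in both arguments (commutativity transfers condition (b)). *)
Lemma binop_mono (a b c d : R) :
  0 <= a -> a <= b -> 0 <= c -> c <= d -> o a c <= o b d.
Proof.
  destruct Ho as (_ & _ & Hmono & Hcomm & _). intros.
  apply Rle_trans with (o b c); [apply Hmono; lra|].
  rewrite (Hcomm b c), (Hcomm b d) by lra. apply Hmono; lra.
Qed.

Hypothesis Hoc : binop_continuous o.

Lemma binop_cv_witness (an bn : nat -> R) (a b al : R) :
  (forall n, 0 <= an n) -> (forall n, 0 <= bn n) -> 0 <= a -> 0 <= b ->
  Un_cv an a -> Un_cv bn b -> o a b < al -> exists n, o (an n) (bn n) < al.
Proof.
  intros Han Hbn Ha Hb Hcva Hcvb Hlt.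
  destruct (Hoc an bn a b Han Hbn Ha Hb Hcva Hcvb (al - o a b) ltac:(lra))
    as [N HN].
  exists N. specialize (HN N (Nat.le_refl N)). unfold R_dist in HN.
  pose proof (Rle_abs (o (an N) (bn N) - o a b)). lra.
Qed.

(* Continuity of o at (p,0), where o p 0 = p. *)
Lemma binop_right_small (p al : R) :
  0 <= p -> p < al -> exists be, 0 < be /\ o p be < al.
Proof.
  destruct Ho as (_ & Ho0 & _). intros Hp Hal.
  destruct (binop_cv_witness (fun _ => p) inv_seq p 0 al)
    as [n Hn]; auto using Rlt_le, inv_seq_pos, const_cv, inv_seq_cv; try lra.
  - rewrite Ho0; lra.
  - exists (inv_seq n). split; [apply inv_seq_pos | exact Hn].
Qed.

(* Continuity of o at (0,0), where o 0 0 = 0. *)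
Lemma binop_diag_small (e : R) : 0 < e -> exists eta, 0 < eta /\ o eta eta < e.
Proof.
  destruct Ho as (_ & Ho0 & _). intros He.
  destruct (binop_cv_witness inv_seq inv_seq 0 0 e)
    as [n Hn]; auto using Rlt_le, inv_seq_pos, inv_seq_cv; try lra.
  - rewrite Ho0; lra.
  - exists (inv_seq n). split; [apply inv_seq_pos | exact Hn].
Qed.

End BinaryOperation.

Section ParametricMetric.
Variables (X : Type) (P : X -> X -> R -> R) (o : R -> R -> R).
Hypothesis Ho : is_binop o.
Hypothesis HP : gen_param_metric P o.

Lemma P_self (b : X) (t : R) : 0 < t -> P b b t = 0.
Proof. destruct HP as (_ & Hsep & _). intros Ht. apply (proj2 (Hsep b b)); auto. Qed.

(* P(a,b,.) is nonincreasing: (P3) with x = b and P(b,b,.) = 0. *)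
Lemma P_antitone (a b : X) (s t : R) : 0 < s -> s <= t -> P a b t <= P a b s.
Proof.
  destruct HP as (Hnn & _ & _ & Htri). destruct Ho as (_ & Ho0 & _).
  intros Hs Hst. destruct (Req_dec s t) as [<-|Hne]; [lra|].
  replace t with (s + (t - s)) by ring.
  eapply Rle_trans; [apply (Htri a b b s (t - s)); lra|].
  rewrite P_self, Ho0 by (try apply Hnn; lra). lra.
Qed.

Lemma P_triangle_bound (x a y : X) (t eta : R) :
  0 < t -> P x y t < eta -> P a y t < eta -> P x a (t + t) <= o eta eta.
Proof.
  destruct HP as (Hnn & _ & _ & Htri). intros Ht Hx Ha.
  eapply Rle_trans; [apply (Htri x a y); lra|].
  pose proof (Hnn x y t Ht). pose proof (Hnn a y t Ht).
  apply binop_mono; auto; lra.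
Qed.

Hypothesis Hoc : binop_continuous o.
Hypothesis H5 : P5 P.

Lemma pball_interior (a b : X) (al t : R) : 0 < t -> P a b t < al ->
  exists be s, 0 < be /\ 0 < s /\ forall c, P b c s < be -> P a c t < al.
Proof.
  destruct HP as (Hnn & _ & Hsym & Htri). intros Ht Hab.
  destruct (H5 a b t Ht (al - P a b t) ltac:(lra)) as [d [Hd Hcont]].
  set (t' := Rmax (t / 2) (t - d / 2)).
  assert (Ht'lo : t / 2 <= t') by apply Rmax_l.
  assert (Ht'd : t - d / 2 <= t') by apply Rmax_r.
  assert (Ht'hi : t' < t) by (unfold t'; apply Rmax_lub_lt; lra).
  assert (Hab' : P a b t' < al).
  { assert (Hnear : D_x no_cond t t' /\ R_dist t' t < d).
    { split; [split; [exact I | lra]|].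
      unfold R_dist. rewrite Rabs_left by lra. lra. }
    specialize (Hcont t' Hnear). simpl in Hcont. unfold R_dist in Hcont.
    pose proof (Rle_abs (P a b t' - P a b t)). lra. }
  destruct (binop_right_small o Ho Hoc (P a b t') al ltac:(apply Hnn; lra) Hab')
    as [be [Hbe Hobe]].
  exists be, (t - t'). split; [lra|]. split; [lra|].
  intros c Hbc. replace t with (t' + (t - t')) by ring.
  eapply Rle_lt_trans; [apply (Htri a c b t' (t - t')); lra|].
  eapply Rle_lt_trans; [|exact Hobe].
  pose proof (Hnn c b (t - t') ltac:(lra)).
  apply binop_mono; auto; try (apply Hnn; lra); try lra.
  rewrite Hsym by lra. lra.
Qed.

Lemma pball_open (a : X) (al t : R) : 0 < t -> tauP_open P (pball P a al t).
Proof.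
  intros Ht b Hb. destruct (pball_interior a b al t Ht Hb) as (be & s & Hi).
  exists be, s. exact Hi.
Qed.

Lemma pball_union_open (A : X -> Prop) (al t : R) : 0 < t ->
  tauP_open P (fun y => exists a, A a /\ pball P a al t y).
Proof.
  intros Ht y [a [Aa Hay]].
  destruct (pball_interior a y al t Ht Hay) as (be & s & Hbe & Hs & Hi).
  exists be, s. split; [exact Hbe|]. split; [exact Hs|].
  intros c Hc. exists a. split; [exact Aa | exact (Hi c Hc)].
Qed.

Lemma inv_seq_close_cv (u : nat -> X) (x : X) :
  (forall n, P x (u n) (inv_seq n) < inv_seq n) -> pconverges P u x.
Proof.
  destruct HP as (Hnn & _ & Hsym & _). intros Hu t Ht e He.
  destruct (inv_seq_eventually_lt (Rmin t e) ltac:(apply Rmin_glb_lt; lra))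
    as [N HN].
  pose proof (Rmin_l t e). pose proof (Rmin_r t e).
  exists N. intros n Hn. specialize (HN n Hn). pose proof (inv_seq_pos n).
  unfold R_dist. rewrite Rminus_0_r, Rabs_right by (apply Rle_ge, Hnn; lra).
  rewrite Hsym by lra.
  eapply Rle_lt_trans; [apply (P_antitone x (u n) (inv_seq n) t); lra|].
  specialize (Hu n). lra.
Qed.

Lemma closed_complement_ball (A : X -> Prop) (x : X) : pclosed P A -> ~ A x ->
  exists e, 0 < e /\ forall y, P x y e < e -> ~ A y.
Proof.
  intros Hcl Hx. apply NNPP. intros Hno.
  assert (Hnear : forall n, exists y, P x y (inv_seq n) < inv_seq n /\ A y).
  { intros n. apply NNPP. intros Hne. apply Hno.
    exists (inv_seq n). split; [apply inv_seq_pos|].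
    intros y Hy Ay. apply Hne. exists y. auto. }
  destruct (choice _ Hnear) as [u Hu].
  apply Hx, (Hcl u x); [intros n; apply Hu|].
  apply inv_seq_close_cv. intros n; apply Hu.
Qed.

End ParametricMetric.

Theorem mainTheorem10 (X : Type) (P : X -> X -> R -> R) (o : R -> R -> R) :
  is_binop o -> binop_continuous o -> gen_param_metric P o -> P5 P ->
  forall (A : X -> Prop) (x : X), pclosed P A -> ~ A x ->
  exists U V : X -> Prop,
    tauP_open P U /\ tauP_open P V /\ U x /\ (forall y, A y -> V y) /\
    (forall y, ~ (U y /\ V y)).
Proof.
  intros Ho Hoc HP H5 A x Hcl Hx.
  destruct (closed_complement_ball X P o Ho HP A x Hcl Hx) as [e [He Hball]].
  destruct (binop_diag_small o Ho Hoc e He) as [eta [Heta Hoeta]].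
  exists (pball P x eta (e / 2)), (fun y => exists a, A a /\ pball P a eta (e / 2) y).
  split; [apply (pball_open X P o Ho HP Hoc H5); lra|].
  split; [apply (pball_union_open X P o Ho HP Hoc H5); lra|].
  split; [unfold pball; rewrite (P_self X P o HP) by lra; exact Heta|].
  split.
  - intros y Ay. exists y. split; [exact Ay|].
    unfold pball. rewrite (P_self X P o HP) by lra. exact Heta.
  - intros y [Uy [a [Aa Vy]]]. apply (Hball a); [|exact Aa].
    replace e with (e / 2 + e / 2) at 1 by field.
    eapply Rle_lt_trans; [|exact Hoeta].
    apply (P_triangle_bound X P o Ho HP x a y); auto; lra.
Qed.
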